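(* Consider the iterates of the Byzantine-resilient algorithm in the context, and let $\Lambda^{k}\in\mathbb R^{H\times D}$ and $\Lambda^{k+1/2}\in\mathbb R^{H\times D}$ be the matrices whose $i$-th rows are $(\lambda_i^k)^\top$ and $(\lambda_i^{k+1/2})^\top$, $i\in\mathcal H$. Then for every $k\ge0$ and every $v\in(0,1)$, $$\Big\|\Lambda^{k+\frac12}-\tfrac1H\mathbf 1\mathbf 1^\top\Lambda^{k+\frac12}\Big\|_F^2\le\Big(\frac{1}{1-v}+\frac{6(\gamma^k)^2}{v\,u_f^2J^2}\Big)\Big\|\Lambda^{k}-\tfrac1H\mathbf 1\mathbf 1^\top\Lambda^{k}\Big\|_F^2+\frac{3(\gamma^k)^2\delta^2H^3}{vJ^2}.$$ In particular, if $\gamma^k\le\frac{u_fJ}{2\sqrt3}$, then $$\Big\|\Lambda^{k+\frac12}-\tfrac1H\mathbf 1\mathbf 1^\top\Lambda^{k+\frac12}\Big\|_F^2\le3\Big\|\Lambda^{k}-\tfrac1H\mathbf 1\mathbf 1^\top\Lambda^{k}\Big\|_F^2+\frac{6(\gamma^k)^2\delta^2H^3}{J^2}.$$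
   Context: Byzantine setting: $J$ agents, of which $\mathcal H=\{1,\dots,H\}$ are honest. For each $i\in\mathcal H$, $f_i:\mathbb R^D\to\mathbb R$ is $u_f$-strongly convex and $L_f$-smooth, $C_i\subset\mathbb R^D$ nonempty compact convex, $s\in\mathbb R^D$. Define $g_i(\lambda)=\frac1H\max_{\theta\in C_i}\{-\lambda^\top\theta-f_i(\theta)\}+\frac1H\lambda^\top s$, so $\nabla g_i(\lambda)=\frac1H s-\frac1H\arg\min_{\theta\in C_i}\{\lambda^\top\theta+f_i(\theta)\}$, and $\delta^2:=\sup_{\lambda\in\mathbb R^D}\max_{i\in\mathcal H}\|\nabla g_i(\lambda)-\frac1H\sum_{j\in\mathcal H}\nabla g_j(\lambda)\|^2<\infty$. The honest agents run: $\theta_i^k=\arg\min_{\theta\in C_i}\{\theta^\top\lambda_i^k+f_i(\theta)\}$, $\lambda_i^{k+1/2}=\lambda_i^k-\gamma^k(\frac1J s-\frac1J\theta_i^k)$ (and then $\lambda_i^{k+1}$ is produced by some aggregation rule), with step sizes $\gamma^k>0$. $\mathbf 1\in\mathbb R^H$ is the all-ones vector and $\|\cdot\|_F$ the Frobenius norm. *)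

From HB Require Import structures.
From mathcomp Require Import all_boot all_order all_algebra.
From mathcomp Require Import all_classical all_reals all_analysis.
Set Implicit Arguments. Unset Strict Implicit. Unset Printing Implicit Defensive.
Import Order.TTheory GRing.Theory Num.Theory.
Import numFieldNormedType.Exports.
Local Open Scope classical_set_scope.
Local Open Scope ring_scope.

Section Defs.
Variable R : realType.

Definition dotv (D : nat) (u v : 'rV[R]_D) : R := \sum_(j < D) u 0 j * v 0 j.
Definition sqnorm (D : nat) (u : 'rV[R]_D) : R := dotv u u.
Definition enorm (D : nat) (u : 'rV[R]_D) : R := Num.sqrt (sqnorm u).

Definition frob2 (m n : nat) (A : 'M[R]_(m, n)) : R := \sum_(i < m) \sum_(j < n) A i j ^+ 2.

Definition dev (H D : nat) (A : 'M[R]_(H, D)) : 'M[R]_(H, D) :=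
  A - (H%:R)^-1 *: (const_mx 1 *m A).

Definition gradv (D : nat) (f : 'rV[R]_D -> R) (x : 'rV[R]_D) : 'rV[R]_D :=
  \row_j ('d f x (delta_mx 0 j)).

Definition strongly_convex (D : nat) (u : R) (f : 'rV[R]_D -> R) : Prop :=
  forall (x y : 'rV[R]_D) (t : R), 0 <= t -> t <= 1 ->
    f (t *: x + (1 - t) *: y) <=
      t * f x + (1 - t) * f y - u / 2 * t * (1 - t) * sqnorm (x - y).

Definition smooth_L (D : nat) (L : R) (f : 'rV[R]_D -> R) : Prop :=
  (forall x, differentiable f x) /\
  forall x y, enorm (gradv f x - gradv f y) <= L * enorm (x - y).

Definition cvx_set (D : nat) (C : set 'rV[R]_D) : Prop :=
  forall x y (t : R), C x -> C y -> 0 <= t -> t <= 1 -> C (t *: x + (1 - t) *: y).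

Definition is_argmin (D : nat) (C : set 'rV[R]_D) (f : 'rV[R]_D -> R)
  (lam th : 'rV[R]_D) : Prop :=
  C th /\ forall th', C th' -> dotv lam th + f th <= dotv lam th' + f th'.

End Defs.

From HB Require Import structures.
From mathcomp Require Import all_boot all_order all_algebra.
From mathcomp Require Import all_classical all_reals all_analysis.
From mathcomp Require Import ring lra.
Import Order.TTheory GRing.Theory Num.Theory.
Import numFieldNormedType.Exports.
Local Open Scope classical_set_scope.
Local Open Scope ring_scope.
Set Implicit Arguments. Unset Strict Implicit.

(* The averaging  dev Λ = Λ - (1/H) 1 1ᵀ Λ  kills the common term  s/J  of the
   half-step, so  dev Λ^{k+1/2} = dev Λ^k + (γ^k/J) dev Θ,  where Θ stacks the local
   argmins θ_i(λ_i^k); Young's inequality then reduces everything to a bound on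
   ‖dev Θ‖².  Compare Θ with the matrix of argmins taken at the average row λ̄:
   strong convexity makes each θ_i Lipschitz, which controls the difference by
   ‖dev Λ^k‖², and the deviation of the argmins at the common point λ̄ is H times the
   gradient heterogeneity, hence bounded through δ². *)

Lemma young_sqrD (R : realFieldType) (x y v : R) : 0 < v -> v < 1 ->
  (x + y) ^+ 2 <= (1 - v)^-1 * x ^+ 2 + v^-1 * y ^+ 2.
Proof.
move=> v0 v1.
have v1n0 : 1 - v != 0 by rewrite subr_eq0 eq_sym lt_eqF.
have gap : (1 - v)^-1 * x ^+ 2 + v^-1 * y ^+ 2 - (x + y) ^+ 2 =
           (v * x - (1 - v) * y) ^+ 2 / (v * (1 - v)).
  by field; rewrite v1n0 gt_eqF.
by rewrite -subr_ge0 gap divr_ge0 ?sqr_ge0 // mulr_ge0 //; lra.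
Qed.

Lemma sum_sqr_dev_mean_le (R : realFieldType) (n : nat) (x : 'I_n -> R) (c : R) :
  \sum_i (x i - n%:R^-1 * \sum_l x l) ^+ 2 <= \sum_i (x i - c) ^+ 2.
Proof.
set m := n%:R^-1 * \sum_l x l.
have sum_x : \sum_l x l = n%:R * m.
  rewrite /m; case: n x {m} => [|n] x; first by rewrite big_ord0 mul0r.
  by rewrite mulrA mulfV ?mul1r // pnatr_eq0.
rewrite -subr_ge0 -sumrB.
have -> : \sum_i ((x i - c) ^+ 2 - (x i - m) ^+ 2) =
          \sum_i ((m - c) * (2 * x i - (m + c))) by apply: eq_bigr => i _; ring.
rewrite -mulr_sumr sumrB -mulr_sumr sumr_const card_ord sum_x -[(m + c) *+ n]mulr_natr.
have -> : (m - c) * (2 * (n%:R * m) - (m + c) * n%:R) = n%:R * (m - c) ^+ 2 by ring.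
by rewrite mulr_ge0 ?sqr_ge0.
Qed.

Lemma mulr_le_amgm (R : realFieldType) (x y c : R) : 0 < c ->
  x * y <= x ^+ 2 / (4 * c) + c * y ^+ 2.
Proof.
move=> c0.
have gap : x ^+ 2 / (4 * c) + c * y ^+ 2 - x * y = (x - 2 * c * y) ^+ 2 / (4 * c).
  by field; rewrite gt_eqF.
by rewrite -subr_ge0 gap divr_ge0 ?sqr_ge0 //; lra.
Qed.

Section Vectors.
Variables (R : realType) (D : nat).
Implicit Types (x y l : 'rV[R]_D) (a : R).

Lemma sqnormE x : sqnorm x = \sum_j x 0 j ^+ 2.
Proof. by apply: eq_bigr => j _; rewrite expr2. Qed.

Lemma sqnorm_ge0 x : 0 <= sqnorm x.
Proof. by rewrite sqnormE sumr_ge0 // => j _; rewrite sqr_ge0. Qed.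

Lemma sqnormZ a x : sqnorm (a *: x) = a ^+ 2 * sqnorm x.
Proof. by rewrite !sqnormE mulr_sumr; apply: eq_bigr => j _; rewrite mxE exprMn. Qed.

Lemma sqnormN x : sqnorm (- x) = sqnorm x.
Proof. by rewrite -scaleN1r sqnormZ sqrrN expr1n mul1r. Qed.

Lemma sqnormBC x y : sqnorm (x - y) = sqnorm (y - x).
Proof. by rewrite -sqnormN opprB. Qed.

Lemma dotv_lincombr l x y a b : dotv l (a *: x + b *: y) = a * dotv l x + b * dotv l y.
Proof.
by rewrite /dotv !mulr_sumr -big_split; apply: eq_bigr => j _; rewrite /= !mxE; ring.
Qed.

Lemma dotvBB l1 l2 x y :
  dotv l1 y - dotv l1 x + dotv l2 x - dotv l2 y = dotv (l1 - l2) (y - x).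
Proof.
by rewrite /dotv -!sumrB -big_split -sumrB; apply: eq_bigr => j _; rewrite /= !mxE; ring.
Qed.

Lemma dotv_le_amgm l x c : 0 < c -> dotv l x <= sqnorm l / (4 * c) + c * sqnorm x.
Proof.
move=> c0; rewrite !sqnormE mulr_suml mulr_sumr -big_split.
by apply: ler_sum => j _; apply: mulr_le_amgm.
Qed.

End Vectors.

Lemma growth_argmin_lipschitz (R : realType) (D : nat) (c : R) (F : 'rV[R]_D -> R)
    (th : 'rV[R]_D -> 'rV[R]_D) :
  0 < c ->
  (forall l1 l2, dotv l1 (th l1) + F (th l1) + c * sqnorm (th l2 - th l1)
                 <= dotv l1 (th l2) + F (th l2)) ->
  forall l1 l2, sqnorm (th l1 - th l2) <= (2 * c)^-2 * sqnorm (l1 - l2).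
Proof.
move=> c0 growth l1 l2.
have h1 := growth l1 l2; have h2 := growth l2 l1.
rewrite sqnormBC in h1.
have := dotv_le_amgm (l1 - l2) (th l2 - th l1) c0.
rewrite -dotvBB [sqnorm (th l2 - _)]sqnormBC => cs.
have cY : c * sqnorm (th l1 - th l2) <= sqnorm (l1 - l2) / (4 * c) by lra.
rewrite -(ler_pM2l c0); apply: le_trans cY _.
by rewrite [leRHS](_ : _ = sqnorm (l1 - l2) / (4 * c)) //; field; rewrite gt_eqF.
Qed.

Section Argmin.
Variables (R : realType) (D : nat) (u : R) (f : 'rV[R]_D -> R) (C : set 'rV[R]_D).
Hypotheses (u_gt0 : 0 < u) (f_sc : strongly_convex u f) (C_cvx : cvx_set C).

Lemma argmin_growth lam a y t : 0 < t -> t <= 1 -> is_argmin C f lam a -> C y ->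
  dotv lam a + f a + u / 2 * (1 - t) * sqnorm (y - a) <= dotv lam y + f y.
Proof.
move=> t0 t1 [Ca a_min] Cy.
have := a_min _ (C_cvx Cy Ca (ltW t0) t1); rewrite dotv_lincombr.
have := f_sc y a (ltW t0) t1.
set Y := sqnorm _ => sc am.
rewrite -(ler_pM2l t0); lra.
Qed.

(* Strong convexity is used only at [t = 1/4], giving the constant 4/(3u) instead of 1/u. *)
Lemma argmin_lipschitz (th : 'rV[R]_D -> 'rV[R]_D) :
  (forall lam, is_argmin C f lam (th lam)) ->
  forall l1 l2, sqnorm (th l1 - th l2) <= 16 / (9 * u ^+ 2) * sqnorm (l1 - l2).
Proof.
move=> th_min l1 l2.
have growth l l' : dotv l (th l) + f (th l) + 3 * u / 8 * sqnorm (th l' - th l)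
                   <= dotv l (th l') + f (th l').
  have := argmin_growth (t := 1 / 4) ltac:(lra) ltac:(lra) (th_min l) (th_min l').1.
  by congr (_ <= _); congr (_ + _ * _); field.
have -> : 16 / (9 * u ^+ 2) = (2 * (3 * u / 8))^-2 by field; rewrite gt_eqF.
have c0 : 0 < 3 * u / 8 by rewrite divr_gt0 ?mulr_gt0.
exact: growth_argmin_lipschitz c0 growth l1 l2.
Qed.

End Argmin.

Section Matrices.
Variables (R : realType) (H D : nat).
Implicit Types (A B M : 'M[R]_(H, D)) (a : R).

Lemma ord_natr_neq0 (i : 'I_H) : H%:R != 0 :> R.
Proof. by rewrite pnatr_eq0 -lt0n (leq_ltn_trans (leq0n i) (ltn_ord i)). Qed.

Lemma frob2_rows M : frob2 M = \sum_i sqnorm (row i M).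
Proof. by apply: eq_bigr => i _; rewrite sqnormE; apply: eq_bigr => j _; rewrite mxE. Qed.

Lemma frob2_ge0 M : 0 <= frob2 M.
Proof. by rewrite frob2_rows sumr_ge0 // => i _; apply: sqnorm_ge0. Qed.

Lemma frob2Z a M : frob2 (a *: M) = a ^+ 2 * frob2 M.
Proof. by rewrite !frob2_rows mulr_sumr; apply: eq_bigr => i _; rewrite linearZ sqnormZ. Qed.

Lemma frob2_young v A B : 0 < v -> v < 1 ->
  frob2 (A + B) <= (1 - v)^-1 * frob2 A + v^-1 * frob2 B.
Proof.
move=> v0 v1; rewrite /frob2 !mulr_sumr -big_split; apply: ler_sum => i _.
rewrite !mulr_sumr -big_split; apply: ler_sum => j _.
by rewrite mxE; apply: young_sqrD.
Qed.

Lemma devE M i j : dev M i j = M i j - H%:R^-1 * \sum_l M l j.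
Proof.
by rewrite /dev !mxE; congr (_ - _ * _); apply: eq_bigr => l _; rewrite !mxE mul1r.
Qed.

Lemma row_dev M i : row i (dev M) = row i M - H%:R^-1 *: \sum_l row l M.
Proof.
apply/rowP => j; rewrite [LHS]mxE devE !mxE summxE.
by congr (_ - _ * _); apply: eq_bigr => l _; rewrite mxE.
Qed.

Lemma devD A B : dev (A + B) = dev A + dev B.
Proof. by rewrite /dev mulmxDr scalerDr opprD addrACA. Qed.

Lemma devZ a M : dev (a *: M) = a *: dev M.
Proof. by rewrite /dev scalerBr scalerA mulrC -scalerA [a *: (_ *m M)]scalemxAr. Qed.

Lemma devB A B : dev (A - B) = dev A - dev B.
Proof. by rewrite devD -scaleN1r devZ scaleN1r. Qed.

Lemma dev_const_rows (s : 'rV[R]_D) : dev (\matrix_(i < H) s) = 0.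
Proof.
apply/matrixP => i j; rewrite devE !mxE.
under eq_bigr do rewrite mxE.
rewrite sumr_const card_ord -[s 0 j *+ H]mulr_natl mulrA.
by rewrite mulVf ?mul1r ?subrr ?ord_natr_neq0.
Qed.

Lemma frob2_dev_le M : frob2 (dev M) <= frob2 M.
Proof.
rewrite /frob2 exchange_big [leRHS]exchange_big; apply: ler_sum => j _ /=.
under eq_bigr do rewrite devE.
have := sum_sqr_dev_mean_le (fun i => M i j) 0.
by under [leRHS]eq_bigr do rewrite subr0.
Qed.

Lemma frob2_dev_heterogeneity (x : 'I_H -> 'rV[R]_D) (s : 'rV[R]_D) (d : R) :
  (forall i, sqnorm ((H%:R^-1 *: s - H%:R^-1 *: x i)
                     - H%:R^-1 *: \sum_j (H%:R^-1 *: s - H%:R^-1 *: x j)) <= d) ->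
  frob2 (dev (\matrix_i x i)) <= H%:R ^+ 3 * d.
Proof.
move=> het_le; rewrite frob2_rows.
have -> : H%:R ^+ 3 * d = \sum_(i < H) H%:R ^+ 2 * d.
  by rewrite sumr_const card_ord -mulr_natl; ring.
apply: ler_sum => i _; rewrite row_dev rowK.
under eq_bigr do rewrite rowK.
have Hn0 := ord_natr_neq0 i.
have gradient_dev : (H%:R^-1 *: s - H%:R^-1 *: x i)
                     - H%:R^-1 *: \sum_j (H%:R^-1 *: s - H%:R^-1 *: x j)
                   = - H%:R^-1 *: (x i - H%:R^-1 *: \sum_l x l).
  apply/rowP => j; rewrite !mxE !summxE.
  under eq_bigr do rewrite !mxE.
  rewrite sumrB sumr_const card_ord -mulr_sumr -[_ *+ H]mulr_natr.
  by field.
have := het_le i; rewrite gradient_dev sqnormZ sqrrN => het_i.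
set r := sqnorm _ in het_i *.
have -> : r = H%:R ^+ 2 * (H%:R^-1 ^+ 2 * r) by field.
by rewrite ler_wpM2l ?exprn_ge0 ?ler0n.
Qed.

End Matrices.

Section ArgminRows.
Variables (R : realType) (H D : nat) (u : R).
Variables (f : 'I_H -> 'rV[R]_D -> R) (C : 'I_H -> set 'rV[R]_D).
Variable theta : 'I_H -> 'rV[R]_D -> 'rV[R]_D.
Hypotheses (u_gt0 : 0 < u) (f_sc : forall i, strongly_convex u (f i)).
Hypotheses (C_cvx : forall i, cvx_set (C i)).
Hypothesis theta_min : forall i lam, is_argmin (C i) (f i) lam (theta i lam).

Lemma frob2_argmin_rows_lipschitz (A : 'M[R]_(H, D)) (lam : 'rV[R]_D) :
  frob2 (\matrix_i theta i (row i A) - \matrix_i theta i lam)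
    <= 16 / (9 * u ^+ 2) * \sum_i sqnorm (row i A - lam).
Proof.
rewrite frob2_rows mulr_sumr; apply: ler_sum => i _.
by rewrite linearB /= !rowK; apply: argmin_lipschitz.
Qed.

Lemma frob2_dev_argmin_rows (A : 'M[R]_(H, D)) (s : 'rV[R]_D) (d : R) :
  (forall i lam, sqnorm ((H%:R^-1 *: s - H%:R^-1 *: theta i lam)
       - H%:R^-1 *: \sum_j (H%:R^-1 *: s - H%:R^-1 *: theta j lam)) <= d) ->
  frob2 (dev (\matrix_i theta i (row i A)))
    <= 32 / (9 * u ^+ 2) * frob2 (dev A) + 2 * (d * H%:R ^+ 3).
Proof.
move=> het_le.
pose mean := H%:R^-1 *: \sum_l row l A.
pose Th := \matrix_i theta i (row i A).
pose P := \matrix_i theta i mean.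
have := frob2_young (dev (Th - P)) (dev P) (_ : 0 < 1 / 2) (_ : 1 / 2 < 1).
rewrite -devD subrK => /(_ ltac:(lra) ltac:(lra)) /le_trans; apply.
have -> : (1 - 1 / 2 : R)^-1 = 2 by field.
have -> : (1 / 2 : R)^-1 = 2 by field.
have -> : 32 / (9 * u ^+ 2) = 2 * (16 / (9 * u ^+ 2)) :> R by ring.
rewrite -mulrA; apply: lerD; rewrite ler_pM2l ?ltr0n //.
- have lip := frob2_argmin_rows_lipschitz A mean.
  have rows_dev : \sum_i sqnorm (row i A - mean) = frob2 (dev A).
    by rewrite frob2_rows; apply: eq_bigr => i _; rewrite row_dev.
  by rewrite rows_dev in lip; apply: le_trans (frob2_dev_le _) lip.
- by rewrite mulrC; exact: frob2_dev_heterogeneity (fun i => het_le i mean).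
Qed.

End ArgminRows.

(* The stated constants leave slack: the argument gives 32/9 where 6 is claimed, and 2 for 3. *)
Lemma young_step_coeffs_le (R : realFieldType) (g u J v F E d h : R) :
  0 < u -> 0 < J -> 0 < v -> 0 <= F -> 0 <= d -> 0 <= h ->
  E <= 32 / (9 * u ^+ 2) * F + 2 * (d * h) ->
  (1 - v)^-1 * F + v^-1 * ((g / J) ^+ 2 * E)
    <= ((1 - v)^-1 + 6 * g ^+ 2 / (v * u ^+ 2 * J ^+ 2)) * F
       + 3 * g ^+ 2 * d * h / (v * J ^+ 2).
Proof.
move=> u0 J0 v0 F0 d0 h0 E_le.
set a := (1 - v)^-1; set K := v^-1 * (g / J) ^+ 2.
have K0 : 0 <= K by rewrite mulr_ge0 ?sqr_ge0 // invr_ge0 ltW.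
have KF0 : 0 <= K * u^-2 * F.
  by apply: mulr_ge0 (mulr_ge0 K0 _) F0; rewrite invr_ge0 exprn_ge0 ?ltW.
have Kdh0 : 0 <= K * (d * h) := mulr_ge0 K0 (mulr_ge0 d0 h0).
have KE : K * E <= 32 / 9 * (K * u^-2 * F) + 2 * (K * (d * h)).
  apply: le_trans (ler_wpM2l K0 E_le) _.
  rewrite [leRHS](_ : _ = K * (32 / (9 * u ^+ 2) * F + 2 * (d * h))) //.
  by field; rewrite gt_eqF.
have -> : (a + 6 * g ^+ 2 / (v * u ^+ 2 * J ^+ 2)) * F
          + 3 * g ^+ 2 * d * h / (v * J ^+ 2)
        = a * F + 6 * (K * u^-2 * F) + 3 * (K * (d * h)).
  by rewrite /K; field; rewrite !gt_eqF.
rewrite [v^-1 * _]mulrA -/K; lra.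
Qed.

Lemma small_step_coeff_le (R : rcfType) (g u J : R) :
  0 < u -> 0 < J -> 0 <= g -> g <= u * J / (2 * Num.sqrt 3) ->
  (1 - 1 / 2)^-1 + 6 * g ^+ 2 / (1 / 2 * u ^+ 2 * J ^+ 2) <= 3.
Proof.
move=> u0 J0 g0 g_le.
have sqrt3 : Num.sqrt 3 ^+ 2 = 3 :> R by rewrite sqr_sqrtr.
have g2_le : 12 * g ^+ 2 <= u ^+ 2 * J ^+ 2.
  have := ler_pM g0 g0 g_le g_le.
  rewrite -!expr2 expr_div_n !exprMn sqrt3 ler_pdivlMr; first lra.
  by rewrite mulr_gt0 ?exprn_gt0.
have uJ2 : 0 < u ^+ 2 * J ^+ 2 by rewrite mulr_gt0 ?exprn_gt0.
have -> : (1 - 1 / 2)^-1 + 6 * g ^+ 2 / (1 / 2 * u ^+ 2 * J ^+ 2)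
          = 2 + 12 * g ^+ 2 / (u ^+ 2 * J ^+ 2) by field; rewrite !gt_eqF.
have : 12 * g ^+ 2 / (u ^+ 2 * J ^+ 2) <= 1 by rewrite ler_pdivrMr // mul1r.
lra.
Qed.

Unset Implicit Arguments.

Theorem lemma3 (R : realType) (J H D : nat) (uf Lf : R)
  (f : 'I_H -> 'rV[R]_D -> R) (C : 'I_H -> set 'rV[R]_D) (s : 'rV[R]_D)
  (theta : 'I_H -> 'rV[R]_D -> 'rV[R]_D) (delta2 : R)
  (gamma : nat -> R) (Lam Lamh : nat -> 'M[R]_(H, D)) :
  (0 < H)%N -> (H <= J)%N -> 0 < uf -> 0 < Lf ->
  (forall i, strongly_convex uf (f i)) ->
  (forall i, smooth_L Lf (f i)) ->
  (forall i, C i !=set0) -> (forall i, compact (C i)) -> (forall i, cvx_set (C i)) ->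
  (forall i lam, is_argmin (C i) (f i) lam (theta i lam)) ->
  let gradg := fun i lam => (H%:R)^-1 *: s - (H%:R)^-1 *: theta i lam in
  let het := fun i lam => sqnorm (gradg i lam - (H%:R)^-1 *: \sum_(j < H) gradg j lam) in
  (forall i lam, het i lam <= delta2) ->
  (forall b, (forall i lam, het i lam <= b) -> delta2 <= b) ->
  (forall k, 0 < gamma k) ->
  (forall k (i : 'I_H),
     row i (Lamh k) = row i (Lam k)
       - gamma k *: ((J%:R)^-1 *: s - (J%:R)^-1 *: theta i (row i (Lam k)))) ->
  forall k,
    (forall v : R, 0 < v -> v < 1 ->
       frob2 (dev (Lamh k)) <=
         ((1 - v)^-1 + 6 * gamma k ^+ 2 / (v * uf ^+ 2 * J%:R ^+ 2)) * frob2 (dev (Lam k))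
         + 3 * gamma k ^+ 2 * delta2 * H%:R ^+ 3 / (v * J%:R ^+ 2)) /\
    (gamma k <= uf * J%:R / (2 * Num.sqrt 3) ->
       frob2 (dev (Lamh k)) <=
         3 * frob2 (dev (Lam k)) + 6 * gamma k ^+ 2 * delta2 * H%:R ^+ 3 / J%:R ^+ 2).
Proof.
move=> H_gt0 HJ uf_gt0 _ f_sc _ _ _ C_cvx theta_min gradg het het_le _ gamma_gt0 step k.
set A := Lam k; set g := gamma k.
have J_gt0 : 0 < J%:R :> R by rewrite ltr0n (leq_trans H_gt0 HJ).
have delta2_ge0 : 0 <= delta2 := le_trans (sqnorm_ge0 _) (het_le (Ordinal H_gt0) 0).
pose Th := \matrix_i theta i (row i A).
have Lamh_eq : Lamh k = A + (g / J%:R) *: (Th - \matrix_(i < H) s).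
  apply/row_matrixP => i.
  rewrite step [in RHS]linearD [in RHS]linearZ [in RHS]linearB /= !rowK.
  by rewrite -scalerBr scalerA -scalerN opprB.
have dev_Lamh : dev (Lamh k) = dev A + (g / J%:R) *: dev Th.
  by rewrite Lamh_eq devD devZ devB dev_const_rows subr0.
have Th_le := frob2_dev_argmin_rows uf_gt0 f_sc C_cvx theta_min A het_le.
have young_bound v : 0 < v -> v < 1 ->
    frob2 (dev (Lamh k)) <=
      ((1 - v)^-1 + 6 * g ^+ 2 / (v * uf ^+ 2 * J%:R ^+ 2)) * frob2 (dev A)
      + 3 * g ^+ 2 * delta2 * H%:R ^+ 3 / (v * J%:R ^+ 2).
  move=> v0 v1; rewrite dev_Lamh; apply: le_trans (frob2_young _ _ v0 v1) _.
  by rewrite frob2Z; apply: young_step_coeffs_le => //; apply: frob2_ge0.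
split=> [// | g_small].
have := young_bound (1 / 2) ltac:(lra) ltac:(lra).
have -> : 3 * g ^+ 2 * delta2 * H%:R ^+ 3 / (1 / 2 * J%:R ^+ 2)
          = 6 * g ^+ 2 * delta2 * H%:R ^+ 3 / J%:R ^+ 2 by field; rewrite gt_eqF.
move/le_trans; apply; rewrite lerD2r ler_wpM2r ?frob2_ge0 //.
exact: small_step_coeff_le (ltW (gamma_gt0 k)) g_small.
Qed.
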